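(* Let $\mathcal H$ be the cyclotomic Hecke algebra (Ariki–Koike algebra) defined in the context, and let $T_0,T_1,\dots,T_{n-1}\in\mathrm{End}_{\mathbb K}(V^{\otimes n})$ be the operators defined in the context. Then there is a (unique) $\mathbb K$-algebra homomorphism $\Phi:\mathcal H\to\mathrm{End}_{\mathbb K}(V^{\otimes n})$ with $\Phi(g_a)=T_a$ for $a=0,1,\dots,n-1$; that is, $g_a\mapsto T_a$ defines a (super) representation of $\mathcal H$ on $V^{\otimes n}$.
   Context: Let $m,n\ge 1$ and $\mathbb K=\mathbb C(q,Q_1,\dots,Q_m)$, the field of rational functions in indeterminates $q,Q_1,\dots,Q_m$. The cyclotomic Hecke algebra $\mathcal H$ of type $G(m,1,n)$ is the unital associative $\mathbb K$-algebra generated by $g_0,g_1,\dots,g_{n-1}$ subject to: $(g_0-Q_1)\cdots(g_0-Q_m)=0$; $g_0g_1g_0g_1=g_1g_0g_1g_0$; $g_i^2=(q-q^{-1})g_i+1$ for $1\le i\le n-1$; $g_ig_j=g_jg_i$ for $0\le i,j\le n-1$ with $|i-j|\ge 2$; $g_ig_{i+1}g_i=g_{i+1}g_ig_{i+1}$ for $1\le i\le n-2$. Fix nonnegative integers $k_1,\dots,k_m,\ell_1,\dots,\ell_m$ with $N=\sum_{c=1}^m(k_c+\ell_c)>0$. Let $V$ be a $\mathbb K$-superspace with homogeneous basis $\{v^{(c)}_a:1\le c\le m,\ 1\le a\le k_c+\ell_c\}$, where $v^{(c)}_a$ is even if $a\le k_c$ and odd if $a>k_c$; $v^{(c)}_a$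 is said to have colour $c$. Totally order this basis by $v^{(c)}_a<v^{(c')}_b$ iff $c<c'$, or $c=c'$ and $a<b$, and write it as $u_1<u_2<\cdots<u_N$. Let $\bar j\in\{0,1\}$ denote the parity of $u_j$ and $\mathrm{col}(j)$ its colour. For $\mathbf i=(i_1,\dots,i_n)\in\{1,\dots,N\}^n$ we also write $\mathbf i$ for the basis vector $u_{i_1}\otimes\cdots\otimes u_{i_n}$ of $V^{\otimes n}$, put $c_t(\mathbf i)=\mathrm{col}(i_t)$, and for $1\le a\le n-1$ let $\mathbf i s_a$ be $\mathbf i$ with the $a$-th and $(a+1)$-th entries interchanged. Define $\mathbb K$-linear operators on $V^{\otimes n}$ on basis vectors by: $s_a(\mathbf i)=(-1)^{\bar i_a}\mathbf i$ if $i_a=i_{a+1}$, and $s_a(\mathbf i)=(-1)^{\bar i_a\bar i_{a+1}}\mathbf i s_a$ if $i_a\ne i_{a+1}$; $T_a(\mathbf i)=(q-q^{-1})\mathbf i+(-1)^{\bar i_a\bar i_{a+1}}\mathbf i s_a$ if $i_a<i_{a+1}$; $T_a(\mathbf i)=\frac{(q-q^{-1})+(-1)^{\bar i_a}(q+q^{-1})}{2}\mathbf i$ if $i_a=i_{a+1}$; $T_a(\mathbf i)=(-1)^{\bar i_a\bar i_{a+1}}\mathbf i s_a$ if $i_a>i_{a+1}$; $S_a(\mathbf i)=T_a(\mathbf i)$ if $c_a(\mathbf i)=c_{a+1}(\mathbf i)$ and $S_a(\mathbf i)=s_a(\mathbf i)$ otherwise; $S_0(\mathbf i)=Q_{c_1(\mathbf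 i)}\mathbf i$; $\theta=S_{n-1}\cdots S_1$ (composition of operators); and $T_0=T_1^{-1}\cdots T_{n-1}^{-1}\,\theta\, S_0$ (each $T_a$, $1\le a\le n-1$, is invertible). *)

From HB Require Import structures.
From mathcomp Require Import all_boot all_algebra all_fingroup.
From mathcomp Require Import complex.
From mathcomp Require Import Rstruct.
From mathcomp Require Import mpoly.

Set Implicit Arguments.
Unset Strict Implicit.
Unset Printing Implicit Defensive.

Import GRing.Theory.
Local Open Scope ring_scope.

(* The ground field  K = C(q, Q_1, ..., Q_m).                              *)
(* C = complex numbers R[i] over the Stdlib reals; the indeterminates are  *)
(* 'X_0 = q and 'X_c = Q_c (c = 1..m) in {mpoly C[m.+1]}, and K is the     *)
(* fraction field of this polynomial ring.                                 *)
Definition CC : fieldType := complex Rdefinitions.R.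
Definition KK (m : nat) : fieldType := {fraction {mpoly CC[m.+1]}}.
Definition qK (m : nat) : KK m := FracField.tofrac ('X_(@ord0 m)).
(* the indeterminate Q_{c+1}, for c : 'I_m  (0-based colour c <-> paper's c+1) *)
Definition QK (m : nat) (c : 'I_m) : KK m := FracField.tofrac ('X_(lift ord0 c)).

Section Relations.
Variables (K : fieldType) (q : K) (m : nat) (Q : 'I_m -> K) (n : nat).

(* The relations are stated in any ring B together with the map sc : K -> B *)
(* giving the scalars (sc c = c 1_B for a K-algebra B).                     *)
Definition HeckeRelR (B : pzRingType) (sc : K -> B) (X : 'I_n -> B) : Prop :=
  [/\
      forall a0 : 'I_n, val a0 = 0%N -> \prod_(c < m) (X a0 - sc (Q c)) = 0,
      forall a0 a1 : 'I_n, val a0 = 0%N -> val a1 = 1%N ->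
        X a0 * X a1 * X a0 * X a1 = X a1 * X a0 * X a1 * X a0,
      forall a : 'I_n, (0 < val a)%N -> X a * X a = sc (q - q^-1) * X a + 1,
      forall a b : 'I_n, (val a + 2 <= val b)%N || (val b + 2 <= val a)%N ->
        X a * X b = X b * X a
    &
      forall a b : 'I_n, (0 < val a)%N -> val b = (val a + 1)%N ->
        X a * X b * X a = X b * X a * X b].

Definition HeckeRel (B : lalgType K) (X : 'I_n -> B) : Prop :=
  HeckeRelR (fun c : K => c%:A) X.

Definition is_Hecke_presentation (A : lalgType K) (g : 'I_n -> A) : Prop :=
  HeckeRel g /\
  forall (B : lalgType K) (h : 'I_n -> B), HeckeRel h ->
    exists f : {lrmorphism A -> B},
      (forall a, f (g a) = h a) /\
      forall f' : {lrmorphism A -> B}, (forall a, f' (g a) = h a) -> f' =1 f.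
End Relations.

Definition is_alg_hom (K : fieldType) (A : lalgType K) (d : nat)
    (f : A -> 'M[K]_d) : Prop :=
  [/\ f 1 = 1%:M,
      forall x y, f (x * y) = f x *m f y,
      forall x y, f (x + y) = f x + f y
    & forall (c : K) x, f (c *: x) = c *: f x].

Section Operators.
Variables (K : fieldType) (q : K) (m : nat) (Q : 'I_m -> K)
          (k l : 'I_m -> nat) (n : nat).

(* Basis of V: v^{(c)}_a  <->  (c ; a) with a : 'I_(k c + l c)            *)
(* (0-based a; the paper's index is a+1).  Colour = tag.                   *)
Definition vbasis := {c : 'I_m & 'I_(k c + l c)}.

(* parity: v^{(c)}_{a+1} is odd iff a+1 > k_c, i.e. k_c <= a *)
Definition vodd (x : vbasis) : bool := (k (tag x) <= val (tagged x))%N.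

Definition vcol (x : vbasis) : 'I_m := tag x.

Definition vlt (x y : vbasis) : bool :=
  (val (tag x) < val (tag y))%N ||
  ((tag x == tag y) && (val (tagged x) < val (tagged y))%N).

(* basis vectors of V^{(x) n}: words i = (i_1, ..., i_n) *)
Definition word := {ffun 'I_n -> vbasis}.

(* For a : 'I_n with 1 <= a (the generator index a), the paper's positions *)
(* a and a+1 are the 0-based positions a-1 and a.                          *)
Definition predo (a : 'I_n) : 'I_n :=
  Ordinal (leq_ltn_trans (leq_pred a) (ltn_ord a)).

Definition wswap (a : 'I_n) (i : word) : word :=
  [ffun t => i (tperm (predo a) a t)].

Definition sgn (b : bool) : K := if b then -1 else 1.

Definition delta (j : word) : word -> K := fun z => (z == j)%:R.

(* images of basis vectors: img i is the coordinate vector of X(i) *)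
Definition s_img (a : 'I_n) (i : word) : word -> K :=
  let x := i (predo a) in let y := i a in
  if x == y then fun z => sgn (vodd x) * delta i z
  else fun z => sgn (vodd x && vodd y) * delta (wswap a i) z.

Definition T_img (a : 'I_n) (i : word) : word -> K :=
  let x := i (predo a) in let y := i a in
  if vlt x y then
    fun z => (q - q^-1) * delta i z + sgn (vodd x && vodd y) * delta (wswap a i) z
  else if x == y then
    fun z => ((q - q^-1) + sgn (vodd x) * (q + q^-1)) / 2%:R * delta i z
  else fun z => sgn (vodd x && vodd y) * delta (wswap a i) z.

Definition S_img (a : 'I_n) (i : word) : word -> K :=
  if vcol (i (predo a)) == vcol (i a) then T_img a i else s_img a i.

(* S_0(i) = Q_{c_1(i)} i ; p0 is the first position *)
Definition S0_img (p0 : 'I_n) (i : word) : word -> K :=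
  fun z => Q (vcol (i p0)) * delta i z.

(* End_K(V^{(x) n}) = square matrices indexed by the words (enumerated by *)
(* enum_val); column j of the matrix is the coordinate vector of X(e_j),   *)
(* so that matrix product is composition of operators.                     *)
Definition wdim : nat := #|{: word}|.

Definition opmx (img : word -> word -> K) : 'M[K]_wdim :=
  \matrix_(r < wdim, s < wdim) img (enum_val s) (enum_val r).

Definition s_op (a : 'I_n) : 'M[K]_wdim := opmx (s_img a).
Definition T_op (a : 'I_n) : 'M[K]_wdim := opmx (T_img a).
Definition S_op (a : 'I_n) : 'M[K]_wdim := opmx (S_img a).
Definition S0_op (p0 : 'I_n) : 'M[K]_wdim := opmx (S0_img p0).

Definition theta_op : 'M[K]_wdim :=
  \big[mulmx/1%:M]_(a <- rev (enum 'I_n) | (0 < val a)%N) S_op a.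

Definition T0_op (p0 : 'I_n) : 'M[K]_wdim :=
  (\big[mulmx/1%:M]_(a <- enum 'I_n | (0 < val a)%N) invmx (T_op a))
    *m theta_op *m S0_op p0.

Definition Tgen (a : 'I_n) : 'M[K]_wdim :=
  if val a == 0%N then T0_op a else T_op a.

End Operators.

(* Each S_a and T_a with a >= 1 sends a basis word to a combination of itself
   and of the word with its letters at positions a and a+1 exchanged, with
   coefficients depending only on these two letters.  The quadratic, braid,
   mixed braid and far commutation relations among the T_a and S_a therefore
   reduce to identities in the two or three letters involved, which are checked
   by cases on their order, colours and parities.
   The relations involving T_0 = T_1^-1 ... T_{n-1}^-1 theta S_0 then follow in
   any ring: theta and T_{n-1} ... T_1 both conjugate T_{a+1} into T_a, and S_0
   commutes with T_a and S_a for a >= 2, which gives the commutations; for the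
   braid relation with T_1 one uses that theta^2 conjugates T_1 into T_{n-1}
   while S_0 S_1 = S_1 S_0', where S_0' reads the colour of the second letter
   and S_0' S_0 commutes with T_1.
   Finally, T_1^-1 ... T_{n-1}^-1 theta is the identity plus terms that
   strictly raise the colour of the first letter, so T_0 is triangular with
   diagonal entries Q_{c_1(i)} and hence annihilated by prod_c (T_0 - Q_c). *)

From Pilot Require Import Defs.
From HB Require Import structures.
From mathcomp Require Import all_boot all_algebra all_fingroup.
From mathcomp Require Import complex.
From mathcomp Require Import Rstruct.
From mathcomp Require Import mpoly.
From mathcomp Require Import zify ring.

Set Implicit Arguments.
Unset Strict Implicit.
Unset Printing Implicit Defensive.

Import GRing.Theory Num.Theory.
Local Open Scope ring_scope.

Section Kernels.
Variables (K : fieldType) (m : nat) (k l : 'I_m -> nat) (n : nat).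
Local Notation word := (word k l n).
Local Notation letter := (Defs.vbasis k l).
Local Notation delta := (@delta K m k l n).

(* As for [opmx], [f i z] is the coefficient of [z] in the image of [i];
   [kmul f g] is the kernel of the composite "first g, then f". *)
Definition kernel := word -> word -> K.

Definition kmul (f g : kernel) : kernel := fun i z => \sum_w g i w * f w z.

Lemma opmxM (f g : kernel) : opmx f * opmx g = opmx (kmul f g).
Proof.
change (opmx f *m opmx g = opmx (kmul f g)).
apply/matrixP=> r s; rewrite !mxE /kmul (reindex (@enum_val word predT)) /=.
  by apply: eq_bigr => t _; rewrite !mxE mulrC.
exact/onW_bij/enum_val_bij.
Qed.

Lemma eq_opmx (f g : kernel) : f =2 g -> opmx f = opmx g.
Proof. by move=> fg; apply/matrixP=> r s; rewrite !mxE fg. Qed.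

Lemma opmxD (f g : kernel) : opmx f + opmx g = opmx (fun i z => f i z + g i z).
Proof. by apply/matrixP=> r s; rewrite !mxE. Qed.

Lemma scalar_opmx (c : K) : c%:M = opmx (fun i z => c * delta i z).
Proof.
by apply/matrixP=> r s; rewrite !mxE /delta (inj_eq enum_val_inj) mulr_natr.
Qed.

Lemma sum_deltaL (j : word) (F : word -> K) : \sum_w delta j w * F w = F j.
Proof.
rewrite (bigD1 j) //= /delta eqxx mul1r big1 ?addr0 // => w /negbTE ->.
by rewrite mul0r.
Qed.

Lemma sum_deltaR (j : word) (F : word -> K) : \sum_w F w * delta w j = F j.
Proof.
rewrite (bigD1 j) //= /delta eqxx mulr1 big1 ?addr0 // => w wj.
by rewrite eq_sym (negbTE wj) mulr0.
Qed.

Lemma delta_neq0 (j z : word) : delta j z != 0 -> z = j.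
Proof. by rewrite /delta; case: (z =P j) => // _; rewrite mulr0n eqxx. Qed.

Definition site2 (A B : letter -> letter -> K) (a : 'I_n) : kernel := fun i z =>
  A (i (predo a)) (i a) * delta i z + B (i (predo a)) (i a) * delta (wswap a i) z.

Lemma kmul_site2 f A B a i z : kmul f (site2 A B a) i z =
  A (i (predo a)) (i a) * f i z + B (i (predo a)) (i a) * f (wswap a i) z.
Proof.
rewrite /kmul /site2; under eq_bigr do rewrite mulrDl -!mulrA.
by rewrite big_split /= -!mulr_sumr !sum_deltaL.
Qed.

Definition kdiag (f : word -> K) : kernel := fun i z => f i * delta i z.

Lemma kmul_kdiagR g f i z : kmul g (kdiag f) i z = f i * g i z.
Proof.
rewrite /kmul /kdiag; under eq_bigr do rewrite -mulrA.
by rewrite -mulr_sumr sum_deltaL.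
Qed.

Lemma kmul_kdiagL f g i z : kmul (kdiag f) g i z = g i z * f z.
Proof.
by rewrite /kmul /kdiag; under eq_bigr do rewrite mulrA; rewrite sum_deltaR.
Qed.

Lemma kmul_kdiag (f g : word -> K) :
  kmul (kdiag f) (kdiag g) =2 kdiag (fun i => g i * f i).
Proof.
move=> i z; rewrite kmul_kdiagL /kdiag /delta.
by have [->|_] := eqVneq z i; rewrite ?mulr0 ?mul0r // mulrAC.
Qed.

Definition mxw (M : 'M[K]_(wdim k l n)) : kernel :=
  fun i z => M (enum_rank z) (enum_rank i).

Lemma mxw_opmx f : mxw (opmx f) =2 f.
Proof. by move=> i z; rewrite /mxw mxE !enum_rankK. Qed.

Lemma mxwM M N i z : mxw (M *m N) i z = kmul (mxw M) (mxw N) i z.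
Proof.
rewrite /mxw /kmul mxE (reindex (@enum_rank word)) /=.
  by apply: eq_bigr => w _; rewrite mulrC.
exact/onW_bij/enum_rank_bij.
Qed.

Lemma mxwD M N i z : mxw (M + N) i z = mxw M i z + mxw N i z.
Proof. by rewrite /mxw mxE. Qed.

Lemma mxwN M i z : mxw (- M) i z = - mxw M i z.
Proof. by rewrite /mxw mxE. Qed.

Lemma mxw1 i z : mxw 1%:M i z = delta i z.
Proof. by rewrite /mxw mxE /delta (inj_eq enum_rank_inj). Qed.

Lemma mxw0 i z : mxw 0 i z = 0.
Proof. by rewrite /mxw mxE. Qed.

End Kernels.

Lemma tperm_conj (T : finType) (x y u v t : T) :
  tperm u v (tperm x y (tperm u v t)) = tperm (tperm u v x) (tperm u v y) t.
Proof. by rewrite -tpermJ -permJ tpermK. Qed.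

Lemma tpermC_disjoint (T : finType) (x y u v t : T) :
  [&& u != x, u != y, v != x & v != y] ->
  tperm u v (tperm x y t) = tperm x y (tperm u v t).
Proof.
case/and4P=> ux uy vx vy.
by rewrite -{1}(tpermK u v t) tperm_conj (tpermD ux vx) (tpermD uy vy).
Qed.

Section Words.
Variables (m : nat) (k l : 'I_m -> nat) (n : nat).
Local Notation word := (word k l n).
Implicit Types (a b t : 'I_n) (i : word).

Lemma predo_neq a : (0 < a)%N -> predo a != a.
Proof. by move=> a_gt0; apply/eqP => /(congr1 val) /=; lia. Qed.

Lemma predo_succ a b : (b : nat) = a.+1 -> predo b = a.
Proof. by move=> eb; apply: val_inj; rewrite /= eb. Qed.

Lemma wswapE a i t : wswap a i t = i (tperm (predo a) a t).
Proof. by rewrite ffunE. Qed.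

Lemma wswap_predo a i : wswap a i (predo a) = i a.
Proof. by rewrite wswapE tpermL. Qed.

Lemma wswap_at a i : wswap a i a = i (predo a).
Proof. by rewrite wswapE tpermR. Qed.

Lemma wswap_other a i t : t != predo a -> t != a -> wswap a i t = i t.
Proof. by move=> tpa ta; rewrite wswapE tpermD // eq_sym. Qed.

Lemma wswapK a : involutive (@wswap m k l n a).
Proof. by move=> i; apply/ffunP=> t; rewrite !wswapE tpermK. Qed.

Lemma wswapC a b i : (0 < a)%N -> (0 < b)%N -> (a.+2 <= b)%N || (b.+2 <= a)%N ->
  wswap a (wswap b i) = wswap b (wswap a i).
Proof.
move=> a_gt0 b_gt0 far; apply/ffunP=> t; rewrite !wswapE tpermC_disjoint //.
by apply/and4P; split; apply/eqP => /(congr1 val) /=; lia.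
Qed.

Lemma wswap_braid a b i : (0 < a)%N -> (b : nat) = a.+1 ->
  wswap b (wswap a (wswap b i)) = wswap a (wswap b (wswap a i)).
Proof.
move=> a_gt0 eb; apply/ffunP=> t; rewrite !wswapE (predo_succ eb).
have [a_pa b_pa pa_b a_b] : [/\ a != predo a, b != predo a, predo a != b & a != b].
  by split; apply/eqP => /(congr1 val) /=; lia.
by rewrite !tperm_conj tpermL tpermR (tpermD a_pa b_pa) (tpermD pa_b a_b).
Qed.

End Words.

Section TwoSites.
Variables (m : nat) (k l : 'I_m -> nat) (n : nat) (a : 'I_n).
Local Notation word := (word k l n).

Definition agree_off2 (z w : word) :=
  [forall t, [&& t != predo a & t != a] ==> (z t == w t)].

Lemma eq_word_sites2 (z w : word) : (z == w) =
  [&& agree_off2 z w, z (predo a) == w (predo a) & z a == w a].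
Proof.
apply/eqP/and3P => [->|[/forallP agree /eqP eq_pa /eqP eq_a]].
  by rewrite !eqxx; split=> //; apply/forallP=> t; apply/implyP.
apply/ffunP=> t; move: (agree t).
have [-> //|t_pa] := eqVneq t (predo a).
by have [-> //|t_a /eqP] := eqVneq t a.
Qed.

Lemma agree_off2_swap z w : agree_off2 z (wswap a w) = agree_off2 z w.
Proof.
apply: eq_forallb => t; case: andP => // -[t_pa t_a].
by rewrite wswap_other.
Qed.

End TwoSites.

Section ThreeSites.
Variables (m : nat) (k l : 'I_m -> nat) (n : nat) (a b : 'I_n).
Hypotheses (a_gt0 : (0 < a)%N) (b_succ : (b : nat) = a.+1).
Local Notation word := (word k l n).
Implicit Types w z : word.

Let predo_b : predo b = a. Proof. exact: predo_succ. Qed.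
Let pa_a : predo a != a. Proof. exact: predo_neq. Qed.
Let pa_b : predo a != b. Proof. by apply/eqP => /(congr1 val) /=; lia. Qed.
Let a_b : a != b. Proof. by apply/eqP => /(congr1 val) /=; lia. Qed.

Lemma wswap_fst_at_next w : wswap a w b = w b.
Proof. by rewrite wswap_other // eq_sym. Qed.

Lemma wswap_snd_at_predo w : wswap b w (predo a) = w (predo a).
Proof. by rewrite wswap_other ?predo_b. Qed.

Lemma wswap_snd_at_fst w : wswap b w a = w b.
Proof. by rewrite -predo_b wswap_predo. Qed.

Lemma wswap_snd_at_snd w : wswap b w b = w a.
Proof. by rewrite wswap_at predo_b. Qed.

Definition agree_off3 z w :=
  [forall t, [&& t != predo a, t != a & t != b] ==> (z t == w t)].

Lemma eq_word_sites3 z w : (z == w) =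
  [&& agree_off3 z w, z (predo a) == w (predo a), z a == w a & z b == w b].
Proof.
apply/eqP/and4P => [->|[/forallP agree /eqP eq_pa /eqP eq_a /eqP eq_b]].
  by rewrite !eqxx; split=> //; apply/forallP=> t; apply/implyP.
apply/ffunP=> t; move: (agree t).
have [-> //|t_pa] := eqVneq t (predo a).
have [-> //|t_a] := eqVneq t a.
by have [-> //|t_b /eqP] := eqVneq t b.
Qed.

Lemma agree_off3_swap_fst z w : agree_off3 z (wswap a w) = agree_off3 z w.
Proof.
apply: eq_forallb => t; case: and3P => // -[t_pa t_a _].
by rewrite wswap_other.
Qed.

Lemma agree_off3_swap_snd z w : agree_off3 z (wswap b w) = agree_off3 z w.
Proof.
apply: eq_forallb => t; case: and3P => // -[_ t_a t_b].
by rewrite wswap_other ?predo_b.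
Qed.

End ThreeSites.

Section SiteKernels.
Variables (K : fieldType) (m : nat) (k l : 'I_m -> nat) (n : nat).
Local Notation word := (word k l n).
Local Notation letter := (Defs.vbasis k l).
Local Notation delta := (@delta K m k l n).
Implicit Types (A B : letter -> letter -> K) (a b : 'I_n) (i z : word).

Lemma site2C A B A' B' a b : (0 < a)%N -> (0 < b)%N -> (a.+2 <= b)%N || (b.+2 <= a)%N ->
  kmul (site2 A B a) (site2 A' B' b) =2 kmul (site2 A' B' b) (site2 A B a).
Proof.
move=> a_gt0 b_gt0 far i z.
have [pa_pb pa_b a_pb a_b] :
    [/\ predo a != predo b, predo a != b, a != predo b & a != b].
  by split; apply/eqP => /(congr1 val) /=; lia.
have [pb_pa pb_a b_pa b_a] :
    [/\ predo b != predo a, predo b != a, b != predo a & b != a].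
  by split; rewrite eq_sym.
rewrite !kmul_site2 /site2 !(wswap_other _ pa_pb pa_b) !(wswap_other _ a_pb a_b).
rewrite !(wswap_other _ pb_pa pb_a) !(wswap_other _ b_pa b_a) wswapC //.
ring.
Qed.

Lemma kdiag_site2 (f0 f1 : word -> K) A B a :
  (forall i, A (i (predo a)) (i a) != 0 -> f0 i = f1 i) ->
  (forall i, f0 (wswap a i) = f1 i) ->
  kmul (kdiag f0) (site2 A B a) =2 kmul (site2 A B a) (kdiag f1).
Proof.
move=> f01 f0_swap i z; rewrite kmul_kdiagL kmul_kdiagR /site2 /delta mulrDl mulrDr.
congr (_ + _).
  have [->|_] := eqVneq z i; last by rewrite !(mulr0, mul0r).
  have [->|A_neq0] := eqVneq (A (i (predo a)) (i a)) 0; first by rewrite !(mulr0, mul0r).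
  by rewrite f01 // mulrC.
have [->|_] := eqVneq z (wswap a i); last by rewrite !(mulr0, mul0r).
by rewrite f0_swap mulrC.
Qed.

Lemma site2_neq0 A B a i z : site2 A B a i z != 0 ->
  (z = i /\ A (i (predo a)) (i a) != 0) \/
  (z = wswap a i /\ B (i (predo a)) (i a) != 0).
Proof.
rewrite /site2 /delta.
have [->|z_i] := eqVneq z i.
  have [A0|] := eqVneq (A (i (predo a)) (i a)) 0; last by left.
  by rewrite A0 mul0r add0r mulf_eq0 negb_or => /andP[B_neq0 /delta_neq0]; right.
by rewrite mulr0 add0r mulf_eq0 negb_or => /andP[B_neq0 /delta_neq0]; right.
Qed.

Lemma site2_agree A B a i z :
  site2 A B a i z != 0 -> forall t, t != predo a -> t != a -> z t = i t.
Proof. by case/site2_neq0 => -[-> _] t *; rewrite ?wswap_other. Qed.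

End SiteKernels.

Section Letters.
Variables (m : nat) (k l : 'I_m -> nat).
Local Notation letter := (Defs.vbasis k l).
Implicit Types x y : letter.

Definition col_nat x : nat := val (vcol x).
Definition idx_nat x : nat := val (tagged x).

Lemma letter_eqE x y :
  (x == y) = (col_nat x == col_nat y) && (idx_nat x == idx_nat y).
Proof.
apply/eqP/andP => [->|[]]; first by rewrite !eqxx.
case: x y => [c a] [d b]; rewrite /col_nat /idx_nat /= => /eqP/val_inj ecd.
by subst d => /eqP/val_inj ->.
Qed.

Lemma vcol_eqE x y : (vcol x == vcol y) = (col_nat x == col_nat y).
Proof. by rewrite val_eqE. Qed.

Lemma vltE x y : vlt x y =
  (col_nat x < col_nat y)%N || (col_nat x == col_nat y) && (idx_nat x < idx_nat y)%N.
Proof. by rewrite /vlt -vcol_eqE. Qed.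

Variant letter_cmp_spec x :
    letter -> bool -> bool -> bool -> bool -> bool -> bool -> Prop :=
  | LtCol y of (col_nat x < col_nat y)%N :
      letter_cmp_spec x y true false false false false false
  | LtIdx y of col_nat x = col_nat y & (idx_nat x < idx_nat y)%N :
      letter_cmp_spec x y true false false false true true
  | GtCol y of (col_nat y < col_nat x)%N :
      letter_cmp_spec x y false true false false false false
  | GtIdx y of col_nat x = col_nat y & (idx_nat y < idx_nat x)%N :
      letter_cmp_spec x y false true false false true true
  | EqLetter : letter_cmp_spec x x false false true true true true.

Lemma letter_cmpP x y : letter_cmp_spec x y (vlt x y) (vlt y x) (x == y) (y == x)
  (vcol x == vcol y) (vcol y == vcol x).
Proof.
rewrite !vltE !letter_eqE !vcol_eqE.
case: (ltngtP (col_nat x) (col_nat y)) => [lt|gt|ec]; [by constructor|by constructor|].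
case: (ltngtP (idx_nat x) (idx_nat y)) => [lt|gt|ei]; [by constructor|by constructor|].
have -> : y = x by apply/eqP; rewrite letter_eqE ec ei !eqxx.
by constructor.
Qed.

End Letters.

Section TwoSiteOperators.
Variables (K : fieldType) (q : K) (m : nat) (k l : 'I_m -> nat) (n : nat).
Local Notation letter := (Defs.vbasis k l).
Local Notation sgn := (sgn K).
Implicit Types x y : letter.

Definition Teigen x : K := if vodd x then - q^-1 else q.
Definition Tdiag x y : K :=
  if vlt x y then q - q^-1 else if x == y then Teigen x else 0.
Definition Tinvdiag x y : K := Tdiag x y - (q - q^-1).
Definition Tswap x y : K := if x == y then 0 else sgn (vodd x && vodd y).
Definition Sdiag x y : K := if vcol x == vcol y then Tdiag x y else 0.

Lemma Sdiag_neq0 x y : Sdiag x y != 0 -> vcol x = vcol y.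
Proof. by rewrite /Sdiag; case: (vcol x =P vcol y) => // _; rewrite eqxx. Qed.

Hypothesis two_neq0 : 2%:R != 0 :> K.

Lemma T_imgE (a : 'I_n) : T_img q a =2 site2 Tdiag Tswap a.
Proof.
move=> i z; rewrite /T_img /site2 /Tdiag /Tswap /Teigen.
move: (i (predo a)) (i a) => x y.
case: letter_cmpP => *; rewrite ?mul0r ?addr0 ?add0r //.
by case: vodd; rewrite /sgn; move: q^-1 => p; field.
Qed.

Lemma S_imgE (a : 'I_n) : S_img q a =2 site2 Sdiag Tswap a.
Proof.
move=> i z; rewrite /S_img /site2 /Sdiag /=.
case: ifP => [_|col_xy]; first exact: T_imgE.
rewrite /s_img /Tswap mul0r add0r.
by case: eqP => [exy|]; rewrite // exy eqxx in col_xy.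
Qed.

Lemma T_opE (a : 'I_n) : T_op q k l a = opmx (site2 Tdiag Tswap a).
Proof. exact/eq_opmx/T_imgE. Qed.

Lemma S_opE (a : 'I_n) : S_op q k l a = opmx (site2 Sdiag Tswap a).
Proof. exact/eq_opmx/S_imgE. Qed.

End TwoSiteOperators.

Ltac revert_mentioning y :=
  repeat match goal with H : context [y] |- _ => revert H end.

Ltac cmp_letters x y :=
  revert_mentioning y; case: (letter_cmpP x y) => {y} [y|y|y|y|]; intros;
  try (exfalso; lia).

Ltac abstract_indicators K :=
  repeat match goal with |- context [(nat_of_bool ?B)%:R] =>
    generalize ((nat_of_bool B)%:R : K); intro end.

Section TwoSiteRelations.
Variables (K : fieldType) (q : K) (m : nat) (k l : 'I_m -> nat) (n : nat).
Hypothesis q_neq0 : q != 0.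
Local Notation word := (word k l n).
Local Notation delta := (@delta K m k l n).
Local Notation sgn := (sgn K).
Local Notation T a := (site2 (@Tdiag K q m k l) (@Tswap K m k l) a).
Local Notation Tinv a := (site2 (@Tinvdiag K q m k l) (@Tswap K m k l) a).
Local Notation S a := (site2 (@Sdiag K q m k l) (@Tswap K m k l) a).

(* After expansion, the target word [z] only enters through indicators
   comparing its letters with those of [i]; once the order and parities of the
   letters [x], [y] of [i] are fixed, the identity holds with these indicators
   treated as independent scalars. *)
Ltac solve_site2 a i z :=
  rewrite ?kmul_site2 /site2 ?wswapK /delta !(eq_word_sites2 a)
          ?wswap_predo ?wswap_at ?wswapK ?agree_off2_swap;
  move: (agree_off2 a z i) (z (predo a)) (z a) (i (predo a)) (i a);
  let x := fresh "x" in let y := fresh "y" in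
  move=> ? ? ? x y;
  rewrite /Tinvdiag /Sdiag /Tswap /Tdiag /Teigen;
  cmp_letters x y; try cmp_letters x y;
  case: (vodd x); try case: (vodd y); rewrite /sgn /=;
  abstract_indicators K; field; rewrite ?q_neq0 //.

Lemma site2_quadT (a : 'I_n) (i z : word) :
  kmul (T a) (T a) i z = (q - q^-1) * T a i z + delta i z.
Proof. solve_site2 a i z. Qed.

Lemma site2_TinvT (a : 'I_n) (i z : word) : kmul (Tinv a) (T a) i z = delta i z.
Proof. solve_site2 a i z. Qed.

Lemma site2_TTinv (a : 'I_n) (i z : word) : kmul (T a) (Tinv a) i z = delta i z.
Proof. solve_site2 a i z. Qed.

Lemma site2_SST (a : 'I_n) (i z : word) :
  kmul (kmul (S a) (S a)) (T a) i z = kmul (kmul (T a) (S a)) (S a) i z.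
Proof. solve_site2 a i z. Qed.

Lemma site2_TinvS (a : 'I_n) (i z : word) :
  let x := i (predo a) in let y := i a in
  kmul (Tinv a) (S a) i z - delta i z =
  (if vlt x y && (vcol x != vcol y) then - sgn (vodd x && vodd y) * (q - q^-1)
   else 0) * delta (wswap a i) z.
Proof. solve_site2 a i z. Qed.

End TwoSiteRelations.

Section ThreeSiteRelations.
Variables (K : fieldType) (q : K) (m : nat) (k l : 'I_m -> nat) (n : nat).
Hypothesis q_neq0 : q != 0.
Local Notation word := (word k l n).
Local Notation T a := (site2 (@Tdiag K q m k l) (@Tswap K m k l) a).
Local Notation S a := (site2 (@Sdiag K q m k l) (@Tswap K m k l) a).

Variables (a b : 'I_n).
Hypotheses (a_gt0 : (0 < a)%N) (b_succ : (b : nat) = a.+1).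

Ltac solve_site3 i z :=
  rewrite !kmul_site2 /site2 ?wswapK ?(wswap_braid _ a_gt0 b_succ) /delta
          !(eq_word_sites3 a b);
  do 3 rewrite ?(predo_succ b_succ) ?wswap_predo ?wswap_at
    ?(wswap_fst_at_next a_gt0 b_succ) ?(wswap_snd_at_predo a_gt0 b_succ)
    ?(wswap_snd_at_fst b_succ) ?(wswap_snd_at_snd b_succ);
  rewrite ?agree_off3_swap_fst ?(agree_off3_swap_snd b_succ);
  move: (agree_off3 a b z i) (z (predo a)) (z a) (z b) (i (predo a)) (i a) (i b);
  let x := fresh "x" in let y := fresh "y" in let w := fresh "w" in
  move=> ? ? ? ? x y w;
  rewrite /Sdiag /Tswap /Tdiag /Teigen;
  cmp_letters x y; try cmp_letters y w; try cmp_letters x w;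
  try cmp_letters x y; try cmp_letters y w; try cmp_letters x w;
  case: (vodd x); try case: (vodd y); try case: (vodd w); rewrite /sgn /=;
  abstract_indicators K; field; rewrite ?q_neq0 //.

Lemma site3_braidT (i z : word) :
  kmul (kmul (T a) (T b)) (T a) i z = kmul (kmul (T b) (T a)) (T b) i z.
Proof. solve_site3 i z. Qed.

Lemma site3_braidS (i z : word) :
  kmul (kmul (S a) (S b)) (S a) i z = kmul (kmul (S b) (S a)) (S b) i z.
Proof. solve_site3 i z. Qed.

Lemma site3_mixed_up (i z : word) :
  kmul (kmul (S b) (S a)) (T b) i z = kmul (kmul (T a) (S b)) (S a) i z.
Proof. solve_site3 i z. Qed.

Lemma site3_mixed_down (i z : word) :
  kmul (kmul (S a) (S b)) (T a) i z = kmul (kmul (T b) (S a)) (S b) i z.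
Proof. solve_site3 i z. Qed.

End ThreeSiteRelations.

Section OrderedProducts.
Variable R : pzRingType.
Implicit Types (f g : nat -> R) (lo len : nat).

Definition prod_up f lo len : R := \prod_(i <- iota lo len) f i.
Definition prod_down f lo len : R := \prod_(i <- rev (iota lo len)) f i.

Lemma prod_up0 f lo : prod_up f lo 0 = 1.
Proof. exact: big_nil. Qed.

Lemma prod_down0 f lo : prod_down f lo 0 = 1.
Proof. exact: big_nil. Qed.

Lemma prod_upSl f lo len : prod_up f lo len.+1 = f lo * prod_up f lo.+1 len.
Proof. exact: big_cons. Qed.

Lemma prod_upSr f lo len : prod_up f lo len.+1 = prod_up f lo len * f (lo + len)%N.
Proof. by rewrite /prod_up -addn1 iotaD big_cat big_seq1. Qed.

Lemma prod_downSl f lo len :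
  prod_down f lo len.+1 = f (lo + len)%N * prod_down f lo len.
Proof. by rewrite /prod_down -addn1 iotaD rev_cat big_cat big_seq1. Qed.

Lemma prod_downSr f lo len : prod_down f lo len.+1 = prod_down f lo.+1 len * f lo.
Proof. by rewrite /prod_down /= rev_cons -cats1 big_cat big_seq1. Qed.

Lemma intertwine_prod (A : R) (s : seq nat) f g :
  (forall i, i \in s -> A * f i = g i * A) ->
  A * \prod_(i <- s) f i = \prod_(i <- s) g i * A.
Proof.
elim: s => [|i s IHs] Afg; first by rewrite !big_nil mulr1 mul1r.
rewrite !big_cons mulrA Afg ?mem_head // -!mulrA IHs // => j sj.
by rewrite Afg // in_cons sj orbT.
Qed.

Lemma comm_prod_down (x : R) f lo len :
  (forall i, (lo <= i < lo + len)%N -> x * f i = f i * x) ->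
  x * prod_down f lo len = prod_down f lo len * x.
Proof. by move=> xf; apply: intertwine_prod => i; rewrite mem_rev mem_iota; apply: xf. Qed.

Lemma intertwine_shift_up (A : R) f g lo len :
  (forall i, (lo <= i < lo + len)%N -> A * f i.+1 = g i * A) ->
  A * prod_up f lo.+1 len = prod_up g lo len * A.
Proof.
rewrite /prod_up -add1n iotaDl big_map => Afg.
by apply: intertwine_prod => i; rewrite mem_iota; apply: Afg.
Qed.

Lemma intertwine_shift_down (A : R) f g lo len :
  (forall i, (lo <= i < lo + len)%N -> A * f i.+1 = g i * A) ->
  A * prod_down f lo.+1 len = prod_down g lo len * A.
Proof.
rewrite /prod_down -add1n iotaDl -map_rev big_map => Afg.
by apply: intertwine_prod => i; rewrite mem_rev mem_iota; apply: Afg.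
Qed.

Lemma prod_up_down_inv f g lo len :
  (forall i, (lo <= i < lo + len)%N -> g i * f i = 1 /\ f i * g i = 1) ->
  prod_up g lo len * prod_down f lo len = 1 /\
  prod_down f lo len * prod_up g lo len = 1.
Proof.
elim: len => [|len IH] gf; first by rewrite prod_up0 prod_down0 mulr1.
rewrite prod_upSr prod_downSl.
have [gf1 gf2] := gf (lo + len)%N ltac:(lia).
have [IH1 IH2] := IH (fun i ilo => gf i ltac:(lia)).
split; first by rewrite -mulrA [g _ * (_ * _)]mulrA gf1 mul1r IH1.
by rewrite -mulrA [prod_down _ _ _ * (_ * _)]mulrA IH2 mul1r gf2.
Qed.

Lemma intertwine_inverse (X Y A B : R) :
  X * Y = 1 -> Y * X = 1 -> X * B = A * X -> Y * A = B * Y.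
Proof.
move=> XY YX XBA.
by rewrite -[Y * A]mulr1 -XY mulrA -[Y * A * X]mulrA -XBA mulrA YX mul1r.
Qed.

End OrderedProducts.

Section TZeroRelations.
(* [T j], [S j], [Ti j] model T_j, S_j, T_j^-1 for 1 <= j <= N = n - 1, [D0]
   models S_0, and [D1] is S_0 read at the second letter. *)
Variables (R : pzRingType) (N : nat) (T S Ti : nat -> R) (D0 D1 : R).

Hypothesis Ti_inv : forall j, (1 <= j <= N)%N -> Ti j * T j = 1 /\ T j * Ti j = 1.
Hypothesis TT_far : forall i j, (1 <= i <= N)%N -> (1 <= j <= N)%N ->
  (i.+2 <= j)%N || (j.+2 <= i)%N -> T i * T j = T j * T i.
Hypothesis ST_far : forall i j, (1 <= i <= N)%N -> (1 <= j <= N)%N ->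
  (i.+2 <= j)%N || (j.+2 <= i)%N -> S i * T j = T j * S i.
Hypothesis SS_far : forall i j, (1 <= i <= N)%N -> (1 <= j <= N)%N ->
  (i.+2 <= j)%N || (j.+2 <= i)%N -> S i * S j = S j * S i.
Hypothesis T_braid : forall j, (1 <= j)%N -> (j < N)%N ->
  T j * T j.+1 * T j = T j.+1 * T j * T j.+1.
Hypothesis S_braid : forall j, (1 <= j)%N -> (j < N)%N ->
  S j * S j.+1 * S j = S j.+1 * S j * S j.+1.
Hypothesis ST_mixed_up : forall j, (1 <= j)%N -> (j < N)%N ->
  S j.+1 * S j * T j.+1 = T j * S j.+1 * S j.
Hypothesis ST_mixed_down : forall j, (1 <= j)%N -> (j < N)%N ->
  S j * S j.+1 * T j = T j.+1 * S j * S j.+1.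
Hypothesis SST_1 : (1 <= N)%N -> S 1 * S 1 * T 1 = T 1 * S 1 * S 1.
Hypothesis D0T_far : forall j, (2 <= j <= N)%N -> D0 * T j = T j * D0.
Hypothesis D0S_far : forall j, (2 <= j <= N)%N -> D0 * S j = S j * D0.
Hypothesis D0S_1 : (1 <= N)%N -> D0 * S 1 = S 1 * D1.
Hypothesis D1D0T_1 : (1 <= N)%N -> D1 * D0 * T 1 = T 1 * (D1 * D0).

Lemma prod_down_shift (U : nat -> R) len j :
  (forall i j, (1 <= i <= N)%N -> (1 <= j <= N)%N ->
     (i.+2 <= j)%N || (j.+2 <= i)%N -> U i * T j = T j * U i) ->
  (forall j, (1 <= j)%N -> (j < N)%N -> U j.+1 * U j * T j.+1 = T j * U j.+1 * U j) ->
  (1 <= j)%N -> (j < len)%N -> (len <= N)%N ->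
  prod_down U 1 len * T j.+1 = T j * prod_down U 1 len.
Proof.
move=> UT_far UT_mixed; elim: len => [|len IH] j_gt0 j_len len_N; first by lia.
rewrite prod_downSl add1n.
case: (ltngtP j len) => [j_lt|len_lt|ej]; last 2 first.
- by lia.
- subst len; case: j j_gt0 IH j_len len_N => [//|j] _ _ _ j_N.
  rewrite prod_downSl add1n -!mulrA -comm_prod_down; last first.
    by move=> i i_j; symmetry; apply: UT_far; lia.
  by rewrite !mulrA UT_mixed //; lia.
by rewrite -mulrA IH ?mulrA ?UT_far //; lia.
Qed.

Let Tdown := prod_down T 1 N.
Let Sdown := prod_down S 1 N.
Let Tiup := prod_up Ti 1 N.
Let Pi := Sdown * D0.
Let tau := Tiup * Pi.

Lemma Tdown_shift j : (1 <= j)%N -> (j < N)%N -> Tdown * T j.+1 = T j * Tdown.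
Proof.
move=> j_gt0 j_N; apply: prod_down_shift => // i i_gt0 i_N.
by rewrite T_braid.
Qed.

Lemma Sdown_shift j : (1 <= j)%N -> (j < N)%N -> Sdown * T j.+1 = T j * Sdown.
Proof. by move=> j_gt0 j_N; apply: prod_down_shift. Qed.

Lemma Tiup_shift j : (1 <= j)%N -> (j < N)%N -> Tiup * T j = T j.+1 * Tiup.
Proof.
move=> j_gt0 j_N; have [TiT TTi] : Tiup * Tdown = 1 /\ Tdown * Tiup = 1.
  by apply: prod_up_down_inv => i i_N; apply: Ti_inv; lia.
by apply: (intertwine_inverse TTi TiT); rewrite Tdown_shift.
Qed.

Lemma Pi_shift j : (1 <= j)%N -> (j < N)%N -> Pi * T j.+1 = T j * Pi.
Proof.
move=> j_gt0 j_N; rewrite /Pi -mulrA D0T_far; last by lia.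
by rewrite mulrA Sdown_shift // mulrA.
Qed.

Lemma tau_commT j : (2 <= j <= N)%N -> tau * T j = T j * tau.
Proof.
case: j => [//|j] j_N; rewrite /tau -mulrA Pi_shift; try lia.
by rewrite mulrA Tiup_shift; try lia; rewrite mulrA.
Qed.

Lemma Sdown_sq_T1 j : (1 <= j <= N)%N ->
  prod_down S 1 j * prod_down S 1 j * T 1 = T j * (prod_down S 1 j * prod_down S 1 j).
Proof.
case: j => [//|j]; elim: j => [|j IH] j_N.
  by rewrite prod_downSl prod_down0 mulr1 SST_1 ?mulrA //; lia.
set P := prod_down S 1 j.
have P1 : prod_down S 1 j.+1 = S j.+1 * P by rewrite prod_downSl add1n.
have P2 : prod_down S 1 j.+2 = S j.+2 * prod_down S 1 j.+1 by rewrite prod_downSl add1n.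
have S_P : S j.+2 * P = P * S j.+2 by apply: comm_prod_down => i i_j; apply: SS_far; lia.
have sq : prod_down S 1 j.+2 * prod_down S 1 j.+2 =
    S j.+1 * S j.+2 * (prod_down S 1 j.+1 * prod_down S 1 j.+1).
  rewrite P2 {1}P1 -!mulrA [P * (S j.+2 * _)]mulrA -S_P !mulrA -S_braid; try lia.
  by rewrite -!mulrA P1 !mulrA.
by rewrite sq -mulrA IH; try lia; rewrite mulrA ST_mixed_down; try lia; rewrite !mulrA.
Qed.

Lemma D0_Sdown : (1 <= N)%N -> D0 * Sdown = Sdown * D1.
Proof.
move=> N_gt0; rewrite /Sdown -(prednK N_gt0) prod_downSr mulrA comm_prod_down.
  by rewrite -mulrA D0S_1 // mulrA.
by move=> i i_N; apply: D0S_far; lia.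
Qed.

Lemma Pi_sq : (1 <= N)%N -> Pi * Pi = Sdown * Sdown * (D1 * D0).
Proof. by move=> N_gt0; rewrite /Pi -mulrA [D0 * _]mulrA D0_Sdown // !mulrA. Qed.

Lemma Pi_shift_inv j : (1 <= j)%N -> (j < N)%N -> Pi * Ti j.+1 = Ti j * Pi.
Proof.
move=> j_gt0 j_N.
have [Ti1T1 T1Ti1] : Ti j.+1 * T j.+1 = 1 /\ T j.+1 * Ti j.+1 = 1 by apply: Ti_inv; lia.
have [TiT _] : Ti j * T j = 1 /\ T j * Ti j = 1 by apply: Ti_inv; lia.
have -> : Pi * Ti j.+1 = Ti j * (T j * Pi) * Ti j.+1 by rewrite mulrA TiT mul1r.
by rewrite -Pi_shift // -!mulrA T1Ti1 mulr1.
Qed.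

Lemma Tiup_pair_TN (N' : nat) : N = N'.+1 ->
  prod_up Ti 2 N' * prod_up Ti 1 N' * T N = T 1 * (prod_up Ti 2 N' * prod_up Ti 1 N').
Proof.
move=> N_succ.
set Td' := prod_down T 2 N'; set Td'' := prod_down T 1 N'.
have Tdown_split : Tdown = Td' * T 1 by rewrite /Tdown N_succ prod_downSr.
have Tdown_splitN : Tdown = T N * Td'' by rewrite /Tdown N_succ prod_downSl add1n.
have Tdown_Td' : Tdown * Td' = Td'' * Tdown.
  by apply: intertwine_shift_down => i i_N; apply: Tdown_shift; lia.
have [inv1 inv2] : prod_up Ti 2 N' * Td' = 1 /\ Td' * prod_up Ti 2 N' = 1.
  by apply: prod_up_down_inv => i i_N; apply: Ti_inv; lia.
have [inv3 inv4] : prod_up Ti 1 N' * Td'' = 1 /\ Td'' * prod_up Ti 1 N' = 1.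
  by apply: prod_up_down_inv => i i_N; apply: Ti_inv; lia.
apply: (@intertwine_inverse _ (Td'' * Td')).
- by rewrite -mulrA [Td' * _]mulrA inv2 mul1r inv4.
- by rewrite -mulrA [prod_up Ti 1 N' * _]mulrA inv3 mul1r inv1.
- by rewrite -mulrA -Tdown_split -Tdown_Td' Tdown_splitN -mulrA.
Qed.

Lemma tau_braid : (1 <= N)%N -> tau * T 1 * tau * T 1 = T 1 * tau * T 1 * tau.
Proof.
move=> N_gt0; set N' := N.-1; have N_succ : N = N'.+1 by rewrite /N'; lia.
set J' := prod_up Ti 2 N'; set J'' := prod_up Ti 1 N'.
have [Ti1T1 T1Ti1] : Ti 1 * T 1 = 1 /\ T 1 * Ti 1 = 1 by apply: Ti_inv; lia.
have tau_split : tau = Ti 1 * (J' * Pi) by rewrite /tau /Tiup N_succ prod_upSl mulrA.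
have Pi_J' : Pi * J' = J'' * Pi.
  by apply: intertwine_shift_up => i i_N; apply: Pi_shift_inv; lia.
set M := J' * Pi.
(* [M * M = (J' J'') (Sdown Sdown) (D1 D0)]: the last factor commutes with
   [T 1], the middle one moves [T 1] to [T N] and the first moves it back. *)
have M_T1 : M * M * T 1 = T 1 * (M * M).
  have -> : M * M = J' * J'' * (Sdown * Sdown) * (D1 * D0).
    rewrite /M mulrA -[J' * Pi * J']mulrA Pi_J' mulrA -[J' * J'' * Pi * Pi]mulrA.
    by rewrite Pi_sq // !mulrA.
  rewrite -mulrA D1D0T_1 // mulrA -[_ * (Sdown * Sdown) * T 1]mulrA Sdown_sq_T1 ?N_gt0 ?leqnn //.
  by rewrite [J' * J'' * _]mulrA (Tiup_pair_TN N_succ) !mulrA.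
rewrite tau_split -/M; clearbody M.
have -> : Ti 1 * M * T 1 * (Ti 1 * M) * T 1 = Ti 1 * (M * M * T 1).
  by rewrite !mulrA -[Ti 1 * M * T 1 * Ti 1]mulrA T1Ti1 mulr1.
have -> : T 1 * (Ti 1 * M) * T 1 * (Ti 1 * M) = M * M.
  by rewrite !mulrA T1Ti1 mul1r -[M * T 1 * Ti 1]mulrA T1Ti1 mulr1.
by rewrite M_T1 mulrA Ti1T1 mul1r.
Qed.

End TZeroRelations.

Lemma nonzero_summand (K : nmodType) (I : finType) (F : I -> K) :
  \sum_i F i != 0 -> exists i, F i != 0.
Proof.
move=> sum_neq0; apply/existsP; apply: contraNT sum_neq0 => /existsPn F0.
by rewrite big1 // => i _; apply/eqP; rewrite -[_ == _]negbK F0.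
Qed.

Lemma vlt_col_lt (m : nat) (k l : 'I_m -> nat) (x y : Defs.vbasis k l) :
  vlt x y -> vcol x != vcol y -> (col_nat x < col_nat y)%N.
Proof. by rewrite vltE vcol_eqE => /orP[//|/andP[->]]. Qed.

Lemma nvlt_col_le (m : nat) (k l : 'I_m -> nat) (x y : Defs.vbasis k l) :
  ~~ vlt x y -> (col_nat y <= col_nat x)%N.
Proof. by rewrite vltE negb_or -leqNgt => /andP[]. Qed.

Section TriangularAnnihilation.
Variables (K : fieldType) (d c : nat) (M : 'M[K]_d) (rho : 'I_d -> nat) (Q : nat -> K).
Hypotheses (rho_lt : forall r, (rho r < c)%N)
  (M_triangular : forall r s, r != s -> M r s != 0 -> (rho s < rho r)%N)
  (M_diag : forall r, M r r = Q (rho r)).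

Lemma triangular_prod_eq0 : \prod_(0 <= j < c) (M - (Q j)%:M) = 0.
Proof.
have prod_rows j : (j <= c)%N -> forall r s,
    (\prod_(0 <= i < j) (M - (Q i)%:M)) r s != 0 -> (j <= rho r)%N.
  elim: j => [//|j IH] j_c r s; rewrite big_nat_recr //=.
  have -> : \prod_(0 <= i < j) (M - (Q i)%:M) * (M - (Q j)%:M) =
            (M - (Q j)%:M) * \prod_(0 <= i < j) (M - (Q i)%:M).
    apply/esym/commr_prod => i _; apply: commrB; last exact: scalar_mxC.
    by apply/commr_sym/commrB; [exact: commr_refl | exact: scalar_mxC].
  rewrite [_ r s]mxE => /nonzero_summand[t]; rewrite mulf_eq0 negb_or => /andP[Gj_rt P_ts].
  have := IH (ltnW j_c) t s P_ts; move: Gj_rt; rewrite !mxE.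
  have [<-|r_t] := eqVneq r t; rewrite ?mulr1n ?mulr0n ?subr0.
    by rewrite M_diag subr_eq0; case: ltngtP => // ->; rewrite eqxx.
  by move=> /(M_triangular r_t); lia.
apply/matrixP => r s; rewrite mxE; apply/eqP; apply: contraTT (rho_lt r).
by rewrite -leqNgt => /prod_rows; apply.
Qed.

End TriangularAnnihilation.

Section Generators.
Variables (K : fieldType) (q : K) (m : nat) (Q : 'I_m -> K) (k l : 'I_m -> nat).
Variable n' : nat.
Hypotheses (q_neq0 : q != 0) (two_neq0 : 2%:R != 0 :> K).
Local Notation n := n'.+1.
Local Notation word := (word k l n).
Local Notation letter := (Defs.vbasis k l).
Local Notation R := 'M[K]_(wdim k l n).
Local Notation delta := (@delta K m k l n).
Local Notation Tk a := (site2 (@Tdiag K q m k l) (@Tswap K m k l) a).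
Local Notation Sk a := (site2 (@Sdiag K q m k l) (@Tswap K m k l) a).
Local Notation Tik a := (site2 (@Tinvdiag K q m k l) (@Tswap K m k l) a).

Definition Tn (j : nat) : R := T_op q k l (inord j).
Definition Sn (j : nat) : R := S_op q k l (inord j).
Definition Tin (j : nat) : R := invmx (Tn j).
Definition D0 : R := S0_op Q k l ord0.
Definition Qat (p : 'I_n) (i : word) : K := Q (vcol (i p)).
Definition D1 : R := opmx (kdiag (Qat (inord 1))).

Lemma TnE j : Tn j = opmx (Tk (inord j)).
Proof. exact: T_opE. Qed.

Lemma SnE j : Sn j = opmx (Sk (inord j)).
Proof. exact: S_opE. Qed.

Lemma TinE j : Tin j = opmx (Tik (inord j)).
Proof.
have TTi : Tn j * opmx (Tik (inord j)) = 1.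
  by rewrite TnE opmxM [1]scalar_opmx; apply: eq_opmx => i z; rewrite site2_TTinv ?mul1r.
have TTi' : Tn j *m opmx (Tik (inord j)) = 1%:M := TTi.
have [Tn_unit _] := mulmx1_unit TTi'.
by rewrite /Tin -[invmx _]mulmx1 -TTi' mulmxA mulVmx // mul1mx.
Qed.

Lemma Tin_inv j : Tin j * Tn j = 1 /\ Tn j * Tin j = 1.
Proof.
rewrite TinE TnE !opmxM [1]scalar_opmx.
by split; apply: eq_opmx => i z; rewrite mul1r ?site2_TinvT ?site2_TTinv.
Qed.

Lemma site2_far (A B A' B' : letter -> letter -> K) i j :
  (1 <= i <= n')%N -> (1 <= j <= n')%N -> (i.+2 <= j)%N || (j.+2 <= i)%N ->
  opmx (site2 A B (inord i)) * opmx (site2 A' B' (inord j)) =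
  opmx (site2 A' B' (inord j)) * opmx (site2 A B (inord i)) :> R.
Proof.
move=> i_n j_n far; rewrite !opmxM; apply: eq_opmx; apply: site2C;
  rewrite ?inordK //; lia.
Qed.

Lemma TT_far i j : (1 <= i <= n')%N -> (1 <= j <= n')%N ->
  (i.+2 <= j)%N || (j.+2 <= i)%N -> Tn i * Tn j = Tn j * Tn i.
Proof. by move=> *; rewrite !TnE site2_far. Qed.

Lemma ST_far i j : (1 <= i <= n')%N -> (1 <= j <= n')%N ->
  (i.+2 <= j)%N || (j.+2 <= i)%N -> Sn i * Tn j = Tn j * Sn i.
Proof. by move=> *; rewrite TnE SnE site2_far. Qed.

Lemma SS_far i j : (1 <= i <= n')%N -> (1 <= j <= n')%N ->
  (i.+2 <= j)%N || (j.+2 <= i)%N -> Sn i * Sn j = Sn j * Sn i.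
Proof. by move=> *; rewrite !SnE site2_far. Qed.

Section Adjacent.
Variable j : nat.
Hypotheses (j_gt0 : (1 <= j)%N) (j_lt : (j < n')%N).
Let a : 'I_n := inord j.
Let b : 'I_n := inord j.+1.
Let a_gt0 : (0 < a)%N. Proof. by rewrite /a inordK //; lia. Qed.
Let b_succ : (b : nat) = a.+1. Proof. by rewrite /a /b !inordK //; lia. Qed.

Lemma T_braid : Tn j * Tn j.+1 * Tn j = Tn j.+1 * Tn j * Tn j.+1.
Proof.
rewrite !TnE !opmxM; apply: eq_opmx => i z; exact: site3_braidT.
Qed.

Lemma S_braid : Sn j * Sn j.+1 * Sn j = Sn j.+1 * Sn j * Sn j.+1.
Proof.
rewrite !SnE !opmxM; apply: eq_opmx => i z; exact: site3_braidS.
Qed.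

Lemma ST_mixed_up : Sn j.+1 * Sn j * Tn j.+1 = Tn j * Sn j.+1 * Sn j.
Proof.
rewrite !TnE !SnE !opmxM; apply: eq_opmx => i z; exact: site3_mixed_up.
Qed.

Lemma ST_mixed_down : Sn j * Sn j.+1 * Tn j = Tn j.+1 * Sn j * Sn j.+1.
Proof.
rewrite !TnE !SnE !opmxM; apply: eq_opmx => i z; exact: site3_mixed_down.
Qed.

End Adjacent.

Lemma T_quad j : Tn j * Tn j = (q - q^-1)%:M * Tn j + 1.
Proof.
rewrite TnE [1]scalar_opmx [_%:M]scalar_opmx !opmxM opmxD.
apply: eq_opmx => i z; rewrite (kmul_kdiagL (fun=> q - q^-1)) mul1r.
by rewrite site2_quadT // [_ * (q - q^-1)]mulrC.
Qed.

Lemma SST_1 : Sn 1 * Sn 1 * Tn 1 = Tn 1 * Sn 1 * Sn 1.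
Proof.
rewrite !TnE !SnE !opmxM; apply: eq_opmx => i z; exact: site2_SST.
Qed.

Lemma D0E : D0 = opmx (kdiag (Qat ord0)).
Proof. by []. Qed.

Lemma predo_one : (1 <= n')%N -> predo (inord 1 : 'I_n) = ord0.
Proof. by move=> n_gt0; apply: val_inj; rewrite /= inordK. Qed.

Lemma Qat0_swap j (i : word) : (2 <= j <= n')%N -> Qat ord0 (wswap (inord j) i) = Qat ord0 i.
Proof.
by move=> j_n; rewrite /Qat wswap_other //; apply/eqP => /(congr1 val) /=; rewrite inordK; lia.
Qed.

Lemma D0T_far j : (2 <= j <= n')%N -> D0 * Tn j = Tn j * D0.
Proof.
move=> j_n; rewrite D0E TnE !opmxM; apply: eq_opmx; apply: kdiag_site2 => // i; exact: Qat0_swap.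
Qed.

Lemma D0S_far j : (2 <= j <= n')%N -> D0 * Sn j = Sn j * D0.
Proof.
move=> j_n; rewrite D0E SnE !opmxM; apply: eq_opmx; apply: kdiag_site2 => // i; exact: Qat0_swap.
Qed.

Lemma D0S_1 : (1 <= n')%N -> D0 * Sn 1 = Sn 1 * D1.
Proof.
move=> n_gt0; rewrite D0E SnE /D1 !opmxM; apply: eq_opmx; apply: kdiag_site2 => i.
  by rewrite predo_one // /Qat => /Sdiag_neq0 ->.
by rewrite /Qat -(predo_one n_gt0) wswap_predo.
Qed.

Lemma D1D0T_1 : (1 <= n')%N -> D1 * D0 * Tn 1 = Tn 1 * (D1 * D0).
Proof.
move=> n_gt0; rewrite D0E /D1 opmxM (eq_opmx (kmul_kdiag _ _)) TnE !opmxM.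
apply: eq_opmx; apply: kdiag_site2 => // i.
by rewrite /Qat -(predo_one n_gt0) wswap_predo wswap_at mulrC.
Qed.

Definition Zprod lo len : R := prod_up Tin lo len * prod_down Sn lo len.
Definition T0 : R := prod_up Tin 1 n' * (prod_down Sn 1 n' * D0).

Lemma T0E : T0 = Zprod 1 n' * D0.
Proof. exact: mulrA. Qed.

Lemma enum_ord_inord : enum 'I_n = [seq inord j | j <- iota 0 n].
Proof.
rewrite -val_enum_ord -map_comp -[LHS]map_id; apply: eq_map => i /=.
by rewrite inord_val.
Qed.

Lemma big_pos_inord (s : seq nat) (F : 'I_n -> R) : all (fun j => j <= n')%N s ->
  \prod_(a <- [seq inord j | j <- s] | (0 < a)%N) F a =
  \prod_(j <- [seq j <- s | (0 < j)%N]) F (inord j).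
Proof.
move=> s_n; rewrite big_map big_filter big_seq_cond [RHS]big_seq_cond.
apply: eq_bigl => j; case: (boolP (j \in s)) => //= /(allP s_n) j_n.
by rewrite inordK.
Qed.

Lemma T0_opE : T0_op q Q k l ord0 = T0.
Proof.
have iota_n : all (fun j => j <= n')%N (iota 0 n) by apply/allP => j; rewrite mem_iota.
have iota_pos : [seq j <- iota 0 n | (0 < j)%N] = iota 1 n'.
  by rewrite /=; apply/all_filterP/allP => j; rewrite mem_iota => /andP[].
rewrite /T0_op /theta_op enum_ord_inord -map_rev.
change (\prod_(a <- [seq inord j | j <- iota 0 n] | (0 < a)%N) invmx (T_op q k l a) *
  \prod_(a <- [seq inord j | j <- rev (iota 0 n)] | (0 < a)%N) S_op q k l a * D0 = T0).
by rewrite T0E !big_pos_inord ?all_rev // filter_rev iota_pos.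
Qed.

Ltac generator_relations :=
  first [ by move=> ? _; apply: Tin_inv | by move=> _; apply: SST_1
        | by apply: TT_far | by apply: ST_far | by apply: SS_far
        | by apply: T_braid | by apply: S_braid
        | by apply: ST_mixed_up | by apply: ST_mixed_down
        | by apply: D0T_far | by apply: D0S_far | by apply: D0S_1
        | by apply: D1D0T_1 ].

Lemma T0_commT j : (2 <= j <= n')%N -> T0 * Tn j = Tn j * T0.
Proof.
by apply: (tau_commT (D1 := D1)); generator_relations.
Qed.

Lemma T0_braid : (1 <= n')%N -> T0 * Tn 1 * T0 * Tn 1 = Tn 1 * T0 * Tn 1 * T0.
Proof.
by apply: (tau_braid (D1 := D1)); generator_relations.
Qed.

Definition raises_col (p : 'I_n) (i z : word) : Prop :=
  (forall t : 'I_n, (t < p)%N -> z t = i t) /\ (col_nat (i p) < col_nat (z p))%N.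

Lemma raises_col_step (a : 'I_n) (i w v z : word) :
  (forall t, t != predo a -> t != a -> w t = i t) ->
  (col_nat (i (predo a)) <= col_nat (w a))%N ->
  raises_col a w v ->
  (forall t, t != predo a -> t != a -> z t = v t) ->
  (col_nat (v a) <= col_nat (z (predo a)))%N ->
  raises_col (predo a) i z.
Proof.
move=> wi i_w [vw w_v] zv v_z; split; last by lia.
move=> t t_pa; have t_lt : (t < a.-1)%N := t_pa.
have [t_pa' t_a] : t != predo a /\ t != a.
  by split; apply/eqP => /(congr1 val) /=; lia.
by rewrite zv // vw ?wi //; lia.
Qed.

Lemma Sn_support j (i w : word) : mxw (Sn j) i w != 0 ->
  (forall t, t != predo (inord j) -> t != inord j -> w t = i t) /\
  (col_nat (i (predo (inord j))) <= col_nat (w (inord j)))%N.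
Proof.
rewrite SnE mxw_opmx => S_iw; split; first exact: site2_agree S_iw.
case/site2_neq0: S_iw => [[-> /Sdiag_neq0 col_eq]|[-> _]]; last by rewrite wswap_at.
by rewrite /col_nat col_eq.
Qed.

Lemma Tin_support j (v z : word) : mxw (Tin j) v z != 0 ->
  (forall t, t != predo (inord j) -> t != inord j -> z t = v t) /\
  (col_nat (v (inord j)) <= col_nat (z (predo (inord j))))%N.
Proof.
rewrite TinE mxw_opmx => Ti_vz; split; first exact: site2_agree Ti_vz.
case/site2_neq0: Ti_vz => [[-> Ti_neq0]|[-> _]]; last by rewrite wswap_predo.
by apply: nvlt_col_le; apply: contra Ti_neq0 => lt; rewrite /Tinvdiag /Tdiag lt subrr.
Qed.

Lemma TinSn_support j (i z : word) :
  mxw (Tin j * Sn j - 1) i z != 0 -> raises_col (predo (inord j)) i z.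
Proof.
rewrite mxwD mxwN mxw1 TinE SnE opmxM mxw_opmx site2_TinvS //=.
set x := i (predo _); set y := i (inord j).
case: ifP => [/andP[xy col_xy]|_]; last by rewrite mul0r eqxx.
rewrite mulf_eq0 negb_or => /andP[_ /delta_neq0 ->].
split; last by rewrite wswap_predo; apply: vlt_col_lt.
move=> t t_lt; have t_lt' : (t < (inord j : 'I_n).-1)%N := t_lt.
by rewrite wswap_other //; apply/eqP => /(congr1 val) /=; lia.
Qed.

Lemma Zprod_split lo len :
  Zprod lo len.+1 - 1 = (Tin lo * Sn lo - 1) + Tin lo * (Zprod lo.+1 len - 1) * Sn lo.
Proof.
rewrite /Zprod prod_upSl prod_downSr mulrBr mulr1 mulrBl !mulrA.
by rewrite [RHS]addrC [RHS]addrA subrK.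
Qed.

Lemma Zprod_support len lo : (1 <= lo)%N -> (lo + len = n)%N -> forall i z,
  mxw (Zprod lo len - 1) i z != 0 -> raises_col (inord lo.-1) i z.
Proof.
elim: len lo => [|len IH] lo lo_gt0 lo_len i z.
  by rewrite /Zprod prod_up0 prod_down0 mulr1 subrr mxw0 eqxx.
have lo_n : (0 < lo <= n')%N by lia.
have -> : inord lo.-1 = predo (inord lo) :> 'I_n.
  by apply: val_inj; rewrite /= !inordK //; lia.
rewrite Zprod_split mxwD.
have [first0|first_neq0 _] := eqVneq (mxw (Tin lo * Sn lo - 1) i z) 0; last first.
  exact: TinSn_support first_neq0.
rewrite first0 add0r mxwM /kmul => /nonzero_summand[w]; rewrite mulf_eq0 negb_or.
case/andP=> /Sn_support[wi i_w]; rewrite mxwM /kmul => /nonzero_summand[v].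
rewrite mulf_eq0 negb_or => /andP[/(IH lo.+1 isT ltac:(lia)) w_v /Tin_support[zv v_z]].
by apply: raises_col_step wi i_w _ zv v_z; rewrite -[inord lo]/(inord lo.+1.-1).
Qed.

Lemma Zprod_unitriangular (w z : word) :
  mxw (Zprod 1 n' - 1) w z != 0 -> (col_nat (w ord0) < col_nat (z ord0))%N.
Proof.
move=> /(Zprod_support (len := n') (lo := 1) isT (erefl _))[_].
by have -> : inord 0 = ord0 :> 'I_n by apply: val_inj; rewrite /= inordK.
Qed.

Lemma mxw_T0 (w z : word) : mxw T0 w z = Qat ord0 w * mxw (Zprod 1 n') w z.
Proof.
rewrite T0E D0E mxwM -(kmul_kdiagR (mxw (Zprod 1 n'))) /kmul.
by apply: eq_bigr => u _; rewrite mxw_opmx.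
Qed.

Lemma T0_cyclotomic : (0 < m)%N -> \prod_(c < m) (T0 - (Q c)%:M) = 0.
Proof.
move=> m_gt0; pose c0 : 'I_m := Ordinal m_gt0.
have -> : \prod_(c < m) (T0 - (Q c)%:M) = \prod_(0 <= j < m) (T0 - (Q (insubd c0 j))%:M).
  by rewrite big_mkord; apply: eq_bigr => c _; rewrite valKd.
have T0_entry r s : T0 r s = mxw T0 (enum_val s) (enum_val r) by rewrite /mxw !enum_valK.
have Z1_entry (w z : word) : mxw (Zprod 1 n') w z = delta w z + mxw (Zprod 1 n' - 1) w z.
  by rewrite mxwD mxwN mxw1 addrC subrK.
apply: (@triangular_prod_eq0 K _ m T0 (fun r => col_nat (enum_val r ord0)) (fun j => Q (insubd c0 j))).
- by move=> r; apply: ltn_ord.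
- move=> r s r_s; rewrite T0_entry mxw_T0 Z1_entry /delta.
  rewrite (inj_eq enum_val_inj) (negbTE r_s) add0r mulf_eq0 negb_or => /andP[_].
  exact: Zprod_unitriangular.
- move=> r; rewrite T0_entry mxw_T0 Z1_entry /delta eqxx.
  have [Z0|/Zprod_unitriangular] := eqVneq (mxw (Zprod 1 n' - 1) (enum_val r) (enum_val r)) 0.
    by rewrite Z0 addr0 mulr1 /Qat /col_nat valKd.
  by rewrite ltnn.
Qed.

Local Notation Tgen := (Tgen q Q k l (n := n)).

Lemma Tgen_pos (a : 'I_n) : (0 < a)%N -> Tgen a = Tn a.
Proof. by move=> a_gt0; rewrite /Tgen /Tn inord_val eqn0Ngt a_gt0. Qed.

Lemma Tgen0 (a : 'I_n) : (a : nat) = 0%N -> Tgen a = T0.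
Proof.
move=> a0; have -> : a = ord0 by apply: val_inj.
by rewrite /Tgen /= T0_opE.
Qed.

Lemma Tgen_hecke : (0 < m)%N -> HeckeRelR q Q (@scalar_mx K (wdim k l n)) Tgen.
Proof.
move=> m_gt0; split.
- by move=> a a0; rewrite Tgen0 //; apply: T0_cyclotomic.
- move=> a0 a1 a0_0 a1_1; rewrite Tgen0 // Tgen_pos ?a1_1 //.
  by apply: T0_braid; move: (ltn_ord a1) a1_1 => /=; lia.
- move=> a a_gt0; rewrite Tgen_pos //; exact: T_quad.
- move=> a b /= far; have a_n := ltn_ord a; have b_n := ltn_ord b.
  case: (posnP a) => [a0|a_gt0].
    by rewrite (Tgen0 a0) Tgen_pos; [apply: T0_commT|]; lia.
  case: (posnP b) => [b0|b_gt0].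
    by rewrite (Tgen0 b0) (Tgen_pos a_gt0); symmetry; apply: T0_commT; lia.
  by rewrite !Tgen_pos //; apply: TT_far; lia.
- move=> a b a_gt0 /=; rewrite addn1 => b_succ.
  rewrite !Tgen_pos ?b_succ //; apply: T_braid => //.
  by move: (ltn_ord b); lia.
Qed.

End Generators.

Lemma HeckeRelR_ext (K : fieldType) (q : K) m (Q : 'I_m -> K) n (B : pzRingType)
    (sc1 sc2 : K -> B) (X : 'I_n -> B) :
  sc1 =1 sc2 -> HeckeRelR q Q sc1 X -> HeckeRelR q Q sc2 X.
Proof.
move=> sc12 [cyclo braid0 quad far braid]; split => // [a a0|a a_gt0].
  by under eq_bigr do rewrite -sc12; apply: cyclo.
by rewrite -sc12; apply: quad.
Qed.

Section AlgHomMorphism.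
Variables (K : fieldType) (A : lalgType K) (d : nat) (f : A -> 'M[K]_d.+1).
Hypothesis f_hom : is_alg_hom f.

Definition alg_hom_fun : A -> 'M[K]_d.+1 := f.

Let f0 : alg_hom_fun 0 = 0.
Proof. by case: f_hom => _ _ _ fZ; rewrite /alg_hom_fun -(scale0r 0) fZ scale0r. Qed.

HB.instance Definition _ := GRing.isNmodMorphism.Build A 'M[K]_d.+1 alg_hom_fun
  (f0, let: And4 _ _ fD _ := f_hom in fD).
HB.instance Definition _ := GRing.isMonoidMorphism.Build A 'M[K]_d.+1 alg_hom_fun
  (let: And4 f1 _ _ _ := f_hom in f1, let: And4 _ fM _ _ := f_hom in fM).
HB.instance Definition _ := GRing.isScalable.Build K A 'M[K]_d.+1 *:%R alg_hom_fun
  (let: And4 _ _ _ fZ := f_hom in fZ).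

Definition alg_hom_lrmorphism : {lrmorphism A -> 'M[K]_d.+1} := alg_hom_fun.

End AlgHomMorphism.

Lemma hecke_presentation_extends (K : fieldType) (q : K) m (Q : 'I_m -> K) n d
    (X : 'I_n -> 'M[K]_d.+1) :
  HeckeRelR q Q (@scalar_mx K d.+1) X ->
  forall (A : lalgType K) (g : 'I_n -> A), is_Hecke_presentation q Q g ->
  exists Phi : A -> 'M[K]_d.+1,
    [/\ is_alg_hom Phi, forall a, Phi (g a) = X a &
        forall Psi : A -> 'M[K]_d.+1,
          is_alg_hom Psi -> (forall a, Psi (g a) = X a) -> Psi =1 Phi].
Proof.
move=> X_rel A g [_ g_univ].
have X_alg_rel : HeckeRel q Q (B := 'M[K]_d.+1) X.
  by apply: HeckeRelR_ext X_rel => c; rewrite scalemx1.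
have [f [fg f_uniq]] := g_univ _ X X_alg_rel.
exists f; split=> // [|Psi Psi_hom Psi_g].
  by split; [exact: rmorph1 | exact: rmorphM | exact: rmorphD | exact: linearZZ].
exact: (f_uniq (alg_hom_lrmorphism Psi_hom)).
Qed.

Lemma qK_neq0 m : qK m != 0.
Proof.
rewrite /qK tofrac_eq0; apply/eqP => /(congr1 (fun p => p@_(U_(@ord0 m)))).
by rewrite mcoeffXU eqxx mcoeff0 => /eqP; rewrite oner_eq0.
Qed.

Lemma two_neq0_KK m : 2%:R != 0 :> KK m.
Proof.
rewrite -(rmorph_nat (@tofrac _)) tofrac_eq0 -mpolyC_nat mpolyC_eq0.
by rewrite pnatr_eq0.
Qed.

Lemma wdim_gt0 m (k l : 'I_m -> nat) n :
  (0 < \sum_(c < m) (k c + l c))%N -> (0 < wdim k l n)%N.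
Proof.
rewrite lt0n sum_nat_eq0 => /forallPn[c]; rewrite -lt0n => c_gt0.
by apply/card_gt0P; exists [ffun=> existT _ c (Ordinal c_gt0)].
Qed.

Theorem mainTheorem1 (m n : nat) (k l : 'I_m -> nat) :
  (0 < m)%N -> (0 < n)%N -> (0 < \sum_(c < m) (k c + l c))%N ->
  let T := Tgen (qK m) (QK (m:=m)) k l (n:=n) in
  (* T_0, ..., T_{n-1} satisfy the defining relations of H in End(V^{(x) n}) *)
  HeckeRelR (qK m) (QK (m:=m)) (@scalar_mx (KK m) (wdim k l n)) T
  /\
  (* g_a |-> T_a extends to a (unique) K-algebra homomorphism              *)
  (* H -> End_K(V^{(x) n}), for H given by any presentation (A, g)         *)
  (forall (A : lalgType (KK m)) (g : 'I_n -> A),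
     is_Hecke_presentation (qK m) (QK (m:=m)) g ->
     exists Phi : A -> 'M[KK m]_(wdim k l n),
       [/\ is_alg_hom Phi, forall a, Phi (g a) = T a &
           forall Psi : A -> 'M[KK m]_(wdim k l n),
             is_alg_hom Psi -> (forall a, Psi (g a) = T a) -> Psi =1 Phi]).
Proof.
move=> m_gt0 n_gt0 N_gt0 T.
have T_rel : HeckeRelR (qK m) (QK (m:=m)) (@scalar_mx (KK m) (wdim k l n)) T.
  by case: n n_gt0 @T => // n' _; apply: Tgen_hecke (qK_neq0 m) (two_neq0_KK m) m_gt0.
split=> //; move: (wdim_gt0 n N_gt0) T T_rel.
by case: (wdim k l n) => // d _; apply: hecke_presentation_extends.
Qed.
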